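(* Let $G=(V=[n],w)$ be a connected loopless weighted graph with $n\ge2$, and let $\gamma=\frac{\max_{1\le i\le n}\mathrm{vol}(i)}{\min_{1\le i\le n}\mathrm{vol}(i)}$. Then for every $0<\varepsilon<1$, $$\frac{\tilde h_G}{h_G}\ \ge\ \Big(1-\frac{2\gamma}{\varepsilon^2 n}\Big)(1-\varepsilon).$$ (Equivalently, since $\tilde h_G=h_{W}$ for the graphon $W$ associated to $G$ by $W(x,y)=w(i,j)$ for $x\in P_i,y\in P_j$, where $P_i$ is the $i$-th interval of the partition of $[0,1]$ into $n$ consecutive intervals of length $1/n$, the same bound holds for $h_W/h_G$.)
   Context: A weighted graph is a pair $(V,w)$ with $V=[n]$ and $w:V\times V\to[0,1]$ symmetric; it is loopless if $w(v,v)=0$ for all $v$. Put $\mathrm{vol}(v)=\sum_{u}w(u,v)$ and $\mathrm{vol}(S)=\sum_{v\in S}\mathrm{vol}(v)$. $G$ is connected if $\sum_{u\in S,v\notin S}w(u,v)>0$ for every $\emptyset\ne S\subsetneq V$. The Cheeger constant is $h_G=\min_{\emptyset\ne S\subsetneq V}\frac{\sum_{u\in S,v\notin S}w(u,v)}{\min\{\mathrm{vol}(S),\mathrm{vol}(V\setminus S)\}}$. A fractional partition of $V$ is a pair $(\rho,\eta)$ of functions $V\to[0,1]$ with $\rho+\eta\equiv1$; $\|\rho\|=\sum_u\rho(u)\mathrm{vol}(u)$, $\|\eta\|=\sum_u\eta(u)\mathrm{vol}(u)$. When both are nonzero, $\tilde h(G;\rho,\eta)=\frac{\sum_{u,v}\rho(u)\eta(v)w(u,v)}{\min\{\|\rho\|,\|\eta\|\}}$;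 the fractional Cheeger constant is $\tilde h_G=\inf\tilde h(G;\rho,\eta)$ over such fractional partitions. For a graphon $W:[0,1]^2\to[0,1]$ (measurable, symmetric), $h_W=\inf_{A:\,0<\mu_L(A)<1}\frac{\int_{A\times A^c}W}{\min\{\int_{A\times I}W,\int_{A^c\times I}W\}}$. *)

(* classical real numbers. Vertices are 0..n-1 (= [n] shifted). *)
From Stdlib Require Import Reals.
Open Scope R_scope.

Fixpoint sumR (n : nat) (f : nat -> R) : R :=
  match n with O => 0 | S k => sumR k f + f k end.

Fixpoint maxR (k : nat) (f : nat -> R) : R :=
  match k with O => f O | S j => Rmax (maxR j f) (f (S j)) end.
Fixpoint minR (k : nat) (f : nat -> R) : R :=
  match k with O => f O | S j => Rmin (minR j f) (f (S j)) end.

Definition weighted_graph (n : nat) (w : nat -> nat -> R) : Prop :=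
  forall i j, (i < n)%nat -> (j < n)%nat ->
    0 <= w i j <= 1 /\ w i j = w j i.

Definition loopless (n : nat) (w : nat -> nat -> R) : Prop :=
  forall i, (i < n)%nat -> w i i = 0.

Definition vol (n : nat) (w : nat -> nat -> R) (v : nat) : R :=
  sumR n (fun u => w u v).

Definition volS (n : nat) (w : nat -> nat -> R) (S : nat -> bool) : R :=
  sumR n (fun v => if S v then vol n w v else 0).

Definition cut (n : nat) (w : nat -> nat -> R) (S : nat -> bool) : R :=
  sumR n (fun u => sumR n (fun v =>
    if S u then (if S v then 0 else w u v) else 0)).

Definition nonempty_proper (n : nat) (S : nat -> bool) : Prop :=
  (exists i, (i < n)%nat /\ S i = true) /\ (exists i, (i < n)%nat /\ S i = false).

Definition connected (n : nat) (w : nat -> nat -> R) : Prop :=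
  forall S : nat -> bool, nonempty_proper n S -> cut n w S > 0.

Definition is_glb (E : R -> Prop) (m : R) : Prop :=
  (forall x, E x -> m <= x) /\ (forall b, (forall x, E x -> b <= x) -> b <= m).

Definition cheeger_values (n : nat) (w : nat -> nat -> R) (x : R) : Prop :=
  exists S : nat -> bool, nonempty_proper n S /\
    x = cut n w S / Rmin (volS n w S) (volS n w (fun v => negb (S v))).

Definition fnorm (n : nat) (w : nat -> nat -> R) (rho : nat -> R) : R :=
  sumR n (fun u => rho u * vol n w u).

Definition frac_ratio (n : nat) (w : nat -> nat -> R) (rho eta : nat -> R) : R :=
  sumR n (fun u => sumR n (fun v => rho u * eta v * w u v))
  / Rmin (fnorm n w rho) (fnorm n w eta).

Definition fractional_partition (n : nat) (rho eta : nat -> R) : Prop :=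
  forall u, (u < n)%nat ->
    0 <= rho u <= 1 /\ 0 <= eta u <= 1 /\ rho u + eta u = 1.

Definition frac_cheeger_values (n : nat) (w : nat -> nat -> R) (x : R) : Prop :=
  exists rho eta : nat -> R, fractional_partition n rho eta /\
    fnorm n w rho <> 0 /\ fnorm n w eta <> 0 /\ x = frac_ratio n w rho eta.

Definition gamma (n : nat) (w : nat -> nat -> R) : R :=
  maxR (n - 1) (vol n w) / minR (n - 1) (vol n w).

From Stdlib Require Import Reals Lra Lia Classical FunctionalExtensionality.
Open Scope R_scope.

(* Round a fractional partition (rho, 1 - rho) to the random set S that contains each vertex u
   independently with probability rho u.  The expectations of cut(S), vol(S) and vol(S)^2 are
   affine in each coordinate of rho, so an inequality between them that holds for all sets (the
   vertices of the cube [0,1]^n) holds for every rho.  Hence for any quadratic q with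
   q(x) <= min(x, V - x) on [0, V], V the total volume, we get h_G * E[q(vol S)] <= E[cut S],
   and the right-hand side is the numerator of the fractional Cheeger ratio.  Centering q at
   A = E[vol S] leaves only Var(vol S), which is at most vmax * A (V - A) / V <= gamma * m (V - m) / n
   with m = min(A, V - A).  A parabola of height (1 - eps) m and half-width eps m when V <= 3m,
   and a parabola tangent to both lines otherwise, give
   E[cut S] >= (1 - 2 gamma / (eps^2 n)) (1 - eps) h_G m. *)

Lemma sumR_ext n f g : (forall i, (i < n)%nat -> f i = g i) -> sumR n f = sumR n g.
Proof.
  induction n as [|n IH]; intros Hfg; simpl; [reflexivity|].
  rewrite IH, Hfg; auto; intros; apply Hfg; lia.
Qed.

Lemma sumR_plus n f g : sumR n (fun i => f i + g i) = sumR n f + sumR n g.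
Proof. induction n as [|n IH]; simpl; [ring|]. rewrite IH; ring. Qed.

Lemma sumR_scal n c f : sumR n (fun i => c * f i) = c * sumR n f.
Proof. induction n as [|n IH]; simpl; [ring|]. rewrite IH; ring. Qed.

Lemma sumR_const n c : sumR n (fun _ => c) = INR n * c.
Proof. induction n as [|n IH]; simpl sumR; [simpl; ring|]. rewrite IH, S_INR; ring. Qed.

Lemma sumR_eq0 n f : (forall i, (i < n)%nat -> f i = 0) -> sumR n f = 0.
Proof. intros Hf. rewrite (sumR_ext n f (fun _ => 0)) by auto. rewrite sumR_const; ring. Qed.

Lemma sumR_le n f g : (forall i, (i < n)%nat -> f i <= g i) -> sumR n f <= sumR n g.
Proof.
  induction n as [|n IH]; intros Hfg; simpl; [lra|].
  assert (sumR n f <= sumR n g) by (apply IH; intros; apply Hfg; lia).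
  assert (f n <= g n) by (apply Hfg; lia).
  lra.
Qed.

Lemma sumR_nonneg n f : (forall i, (i < n)%nat -> 0 <= f i) -> 0 <= sumR n f.
Proof.
  intros Hf. replace 0 with (sumR n (fun _ => 0)) by (rewrite sumR_const; ring).
  apply sumR_le; auto.
Qed.

Lemma sumR_ge_term n f k : (forall i, (i < n)%nat -> 0 <= f i) -> (k < n)%nat ->
  f k <= sumR n f.
Proof.
  induction n as [|n IH]; intros Hf Hk; [lia|]; simpl.
  assert (0 <= sumR n f) by (apply sumR_nonneg; intros; apply Hf; lia).
  destruct (Nat.eq_dec k n) as [->|Hkn]; [lra|].
  assert (f k <= sumR n f) by (apply IH; [intros; apply Hf|]; lia).
  assert (0 <= f n) by (apply Hf; lia).
  lra.
Qed.

Lemma sumR_pos_term n f : 0 < sumR n f -> exists i, (i < n)%nat /\ 0 < f i.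
Proof.
  induction n as [|n IH]; simpl; intros Hpos; [lra|].
  destruct (Rlt_dec 0 (f n)) as [Hn|Hn]; [exists n; split; auto|].
  destruct IH as [i [Hi Hfi]]; [lra|]. exists i; split; auto.
Qed.

Lemma sumR_replace_term n k X Y : (k < n)%nat ->
  sumR n (fun v => if Nat.eq_dec k v then X else Y v) = sumR n Y - Y k + X.
Proof.
  induction n as [|n IH]; intros Hk; [lia|]; simpl.
  destruct (Nat.eq_dec k n) as [->|Hkn].
  - rewrite (sumR_ext n _ Y); [ring|].
    intros i Hi. destruct (Nat.eq_dec n i); [lia|reflexivity].
  - rewrite IH by lia. ring.
Qed.

Lemma maxR_ge k f i : (i <= k)%nat -> f i <= maxR k f.
Proof.
  induction k as [|k IH]; intros Hi; simpl.
  - replace i with 0%nat by lia; lra.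
  - destruct (Nat.eq_dec i (S k)) as [->|]; [apply Rmax_r|].
    eapply Rle_trans; [apply IH; lia|apply Rmax_l].
Qed.

Lemma minR_le k f i : (i <= k)%nat -> minR k f <= f i.
Proof.
  induction k as [|k IH]; intros Hi; simpl.
  - replace i with 0%nat by lia; lra.
  - destruct (Nat.eq_dec i (S k)) as [->|]; [apply Rmin_r|].
    eapply Rle_trans; [apply Rmin_l|apply IH; lia].
Qed.

Lemma minR_pos k f : (forall i, (i <= k)%nat -> 0 < f i) -> 0 < minR k f.
Proof.
  induction k as [|k IH]; intros Hf; simpl; [apply Hf; lia|].
  apply Rmin_pos; [apply IH; intros|]; apply Hf; lia.
Qed.

Definition affine (F : R -> R) : Prop := forall t, F t = (1 - t) * F 0 + t * F 1.

Lemma affine_sumR n (f : R -> nat -> R) :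
  (forall i, (i < n)%nat -> affine (fun t => f t i)) -> affine (fun t => sumR n (f t)).
Proof.
  induction n as [|n IH]; intros Hf t; simpl; [ring|].
  rewrite (IH ltac:(intros; apply Hf; lia) t), (Hf n ltac:(lia) t). ring.
Qed.

Definition upd (r : nat -> R) (k : nat) (t : R) : nat -> R :=
  fun u => if Nat.eq_dec u k then t else r u.

Definition unit_cube (n : nat) (r : nat -> R) : Prop :=
  forall u, (u < n)%nat -> 0 <= r u <= 1.

Lemma multiaffine_nonneg_on_cube n (Phi : (nat -> R) -> R) :
  (forall k r, (k < n)%nat -> affine (fun t => Phi (upd r k t))) ->
  (forall r, (forall u, (u < n)%nat -> r u = 0 \/ r u = 1) -> 0 <= Phi r) ->
  forall r, unit_cube n r -> 0 <= Phi r.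
Proof.
  intros Haff Hvertex.
  assert (Hm : forall m r, unit_cube n r ->
            (forall u, (m <= u < n)%nat -> r u = 0 \/ r u = 1) -> 0 <= Phi r).
  { induction m as [|m IH]; intros r Hr Hbin.
    - apply Hvertex; intros; apply Hbin; lia.
    - destruct (Compare_dec.lt_dec m n) as [Hmn|Hmn];
        [|apply IH; auto; intros; apply Hbin; lia].
      assert (Hr_upd : r = upd r m (r m)).
      { apply functional_extensionality; intro u; unfold upd.
        destruct (Nat.eq_dec u m) as [->|]; reflexivity. }
      assert (Hround : forall t, t = 0 \/ t = 1 -> 0 <= Phi (upd r m t)).
      { intros t Ht. apply IH.
        - intros u Hu; unfold upd; destruct (Nat.eq_dec u m); [lra|auto].
        - intros u Hu; unfold upd; destruct (Nat.eq_dec u m); auto. apply Hbin; lia. }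
      rewrite Hr_upd, (Haff m r Hmn (r m)).
      pose proof (Hround 0 (or_introl eq_refl)).
      pose proof (Hround 1 (or_intror eq_refl)).
      pose proof (Hr m Hmn). nra. }
  intros r Hr. apply (Hm n r Hr). intros; lia.
Qed.

Lemma wide_parabola_le e m a x : 0 < e < 1 -> 0 < m -> m <= a -> 0 <= x ->
  (1 - e) * m - (1 - e) / (e ^ 2 * m) * (x - a) ^ 2 <= x.
Proof.
  intros He Hm Ha Hx.
  assert (HK : 0 < (1 - e) / (e ^ 2 * m))
    by (apply Rdiv_lt_0_compat; [lra|apply Rmult_lt_0_compat; [apply pow_lt|]; lra]).
  destruct (Rle_dec (a - e * m) x) as [Hnear|Hfar].
  - assert (0 <= (1 - e) / (e ^ 2 * m) * (x - a) ^ 2)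
      by (apply Rmult_le_pos; [lra|apply pow2_ge_0]).
    nra.
  - assert (Hsq : (e * m) ^ 2 <= (x - a) ^ 2).
    { assert (0 < e * m) by nra.
      replace ((x - a) ^ 2) with ((a - x) * (a - x)) by ring.
      replace ((e * m) ^ 2) with ((e * m) * (e * m)) by ring.
      apply Rmult_le_compat; lra. }
    assert (Hval : (1 - e) / (e ^ 2 * m) * (e * m) ^ 2 = (1 - e) * m) by (field; nra).
    assert ((1 - e) / (e ^ 2 * m) * (e * m) ^ 2 <= (1 - e) / (e ^ 2 * m) * (x - a) ^ 2)
      by (apply Rmult_le_compat_l; lra).
    lra.
Qed.

Lemma wide_parabola_le_min e V A x : 0 < e < 1 -> 0 < Rmin A (V - A) -> 0 <= x <= V ->
  let m := Rmin A (V - A) in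
  (1 - e) * m - (1 - e) / (e ^ 2 * m) * (x - A) ^ 2 <= Rmin x (V - x).
Proof.
  intros He Hm Hx m. apply Rmin_glb.
  - apply wide_parabola_le; [exact He|exact Hm|apply Rmin_l|lra].
  - replace ((x - A) ^ 2) with ((V - x - (V - A)) ^ 2) by ring.
    apply wide_parabola_le; [exact He|exact Hm|apply Rmin_r|lra].
Qed.

Lemma narrow_parabola_le_min V A : 0 < V - 2 * Rmin A (V - A) ->
  let m := Rmin A (V - A) in
  exists be, forall x, m + be * (x - A) - 1 / (V - 2 * m) * (x - A) ^ 2 <= Rmin x (V - x).
Proof.
  intros HD m. change (0 < V - 2 * m) in HD.
  (* for A <= V - A the parabola is tangent to y = x at x = A and to y = V - x at x = V - A *)
  assert (Hsq : forall y, 0 <= 1 / (V - 2 * m) * y ^ 2)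
    by (intro y; apply Rmult_le_pos; [left; apply Rdiv_lt_0_compat|apply pow2_ge_0]; lra).
  destruct (Rle_dec A (V - A)) as [HA|HA].
  - assert (Hm : m = A) by (apply Rmin_left; exact HA).
    exists 1. intro x. rewrite Hm in *. apply Rmin_glb.
    + pose proof (Hsq (x - A)). lra.
    + assert (E : V - x - (A + 1 * (x - A) - 1 / (V - 2 * A) * (x - A) ^ 2)
                  = 1 / (V - 2 * A) * (V - A - x) ^ 2) by (field; lra).
      pose proof (Hsq (V - A - x)). lra.
  - assert (Hm : m = V - A) by (apply Rmin_right; lra).
    exists (-1). intro x. rewrite Hm in *. apply Rmin_glb.
    + assert (E : x - (V - A + -1 * (x - A) - 1 / (V - 2 * (V - A)) * (x - A) ^ 2)
                  = 1 / (V - 2 * (V - A)) * (x + A - V) ^ 2) by (field; lra).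
      pose proof (Hsq (x + A - V)). lra.
    + pose proof (Hsq (x - A)). lra.
Qed.

Lemma cheeger_factor_le e y : 0 <= e <= 1 -> 0 <= y <= 1 -> (1 - y) * (1 - e) <= 1 - y * e ^ 2.
Proof. intros He Hy. assert (0 <= y * e <= 1) by nra. nra. Qed.

Lemma wide_case_bound e g nn m V Var : 0 < e < 1 -> 0 < m -> V <= 3 * m -> 0 < nn -> 0 <= g ->
  Var * nn <= g * m * (V - m) ->
  (1 - 2 * g / (e ^ 2 * nn)) * (1 - e) * m <= (1 - e) * m - (1 - e) / (e ^ 2 * m) * Var.
Proof.
  intros He Hm HV Hnn Hg HVar.
  assert (E : (1 - e) * m - (1 - e) / (e ^ 2 * m) * Var - (1 - 2 * g / (e ^ 2 * nn)) * (1 - e) * m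
              = (1 - e) / (e ^ 2 * m * nn) * (2 * g * m ^ 2 - Var * nn)) by (field; nra).
  assert (g * m * (V - m) <= 2 * g * m ^ 2) by (assert (0 <= g * m) by nra; nra).
  assert (0 <= (1 - e) / (e ^ 2 * m * nn) * (2 * g * m ^ 2 - Var * nn)).
  { apply Rmult_le_pos; [|lra].
    left; apply Rdiv_lt_0_compat; [lra|].
    apply Rmult_lt_0_compat; [apply Rmult_lt_0_compat; [apply pow_lt|]|]; lra. }
  lra.
Qed.

Lemma narrow_case_bound e g nn m V Var : 0 < e < 1 -> 0 < m -> 3 * m < V -> 0 < nn -> 0 <= g ->
  Var * nn <= g * m * (V - m) -> 0 < (1 - 2 * g / (e ^ 2 * nn)) * (1 - e) ->
  (1 - 2 * g / (e ^ 2 * nn)) * (1 - e) * m <= m - 1 / (V - 2 * m) * Var.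
Proof.
  intros He Hm HV Hnn Hg HVar Hc.
  set (y := 2 * g / (e ^ 2 * nn)) in *.
  assert (Hy : 0 <= y <= 1).
  { split; [unfold y; apply Rmult_le_pos; [lra|left; apply Rinv_0_lt_compat, Rmult_lt_0_compat;
      [apply pow_lt|]; lra]|].
    assert (0 < 1 - y) by (apply (Rmult_lt_reg_r (1 - e)); lra). lra. }
  assert (E : m - 1 / (V - 2 * m) * Var - (1 - y * e ^ 2) * m
              = 1 / (nn * (V - 2 * m)) * (2 * g * m * (V - 2 * m) - Var * nn))
    by (unfold y; field; repeat split; nra).
  assert (g * m * (V - m) <= 2 * g * m * (V - 2 * m)) by (assert (0 <= g * m) by nra; nra).
  assert (0 <= 1 / (nn * (V - 2 * m)) * (2 * g * m * (V - 2 * m) - Var * nn)).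
  { apply Rmult_le_pos; [|lra]. left; apply Rdiv_lt_0_compat; nra. }
  pose proof (cheeger_factor_le e y ltac:(lra) Hy).
  assert ((1 - y) * (1 - e) * m <= (1 - y * e ^ 2) * m) by (apply Rmult_le_compat_r; lra).
  lra.
Qed.

(* For the random set S containing each vertex u independently with probability r u,
   fcut, fnorm, evol2 and varvol are E[cut S], E[vol S], E[(vol S)^2] and Var(vol S). *)
Definition fcut n w (r : nat -> R) : R :=
  sumR n (fun u => sumR n (fun v => r u * (1 - r v) * w u v)).

Definition evol2 n w (r : nat -> R) : R :=
  sumR n (fun u => sumR n (fun v =>
    if Nat.eq_dec u v then r u * vol n w u ^ 2 else r u * r v * vol n w u * vol n w v)).

Definition varvol n w (r : nat -> R) : R :=
  sumR n (fun u => r u * (1 - r u) * vol n w u ^ 2).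

Lemma evol2_eq n w r : evol2 n w r = fnorm n w r ^ 2 + varvol n w r.
Proof.
  unfold evol2, varvol.
  rewrite (sumR_ext n _ (fun u => fnorm n w r * (r u * vol n w u)
                                  + r u * (1 - r u) * vol n w u ^ 2)).
  - rewrite sumR_plus, sumR_scal. unfold fnorm; ring.
  - intros u Hu. rewrite sumR_replace_term by exact Hu.
    rewrite (sumR_ext n _ (fun v => (r u * vol n w u) * (r v * vol n w v))) by (intros; ring).
    rewrite sumR_scal. unfold fnorm; ring.
Qed.

Lemma affine_fcut n w r k : loopless n w -> (k < n)%nat -> affine (fun t => fcut n w (upd r k t)).
Proof.
  intros Hl Hk. apply affine_sumR; intros u Hu. apply affine_sumR; intros v Hv.
  intro t; unfold upd.
  destruct (Nat.eq_dec u k), (Nat.eq_dec v k); subst; try rewrite (Hl k Hk); ring.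
Qed.

Lemma affine_fnorm n w r k : affine (fun t => fnorm n w (upd r k t)).
Proof.
  apply affine_sumR; intros u Hu. intro t; unfold upd. destruct (Nat.eq_dec u k); ring.
Qed.

Lemma affine_evol2 n w r k : affine (fun t => evol2 n w (upd r k t)).
Proof.
  apply affine_sumR; intros u Hu. apply affine_sumR; intros v Hv.
  intro t; unfold upd.
  destruct (Nat.eq_dec u v), (Nat.eq_dec u k), (Nat.eq_dec v k); subst; try congruence; ring.
Qed.

Section WeightedGraph.
Variables (n : nat) (w : nat -> nat -> R).
Hypothesis Hw : weighted_graph n w.
Local Notation V := (sumR n (vol n w)).

Lemma vol_nonneg u : (u < n)%nat -> 0 <= vol n w u.
Proof. intros Hu. apply sumR_nonneg. intros i Hi. apply (Hw i u Hi Hu). Qed.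

Lemma volS_compl S : volS n w S + volS n w (fun v => negb (S v)) = V.
Proof. unfold volS. rewrite <- sumR_plus. apply sumR_ext; intros; destruct (S i); simpl; ring. Qed.

Lemma volS_bounds S : 0 <= volS n w S <= V.
Proof.
  pose proof (volS_compl S) as Hcompl.
  assert (Hnonneg : forall T, 0 <= volS n w T).
  { intro T. apply sumR_nonneg; intros i Hi. destruct (T i); [apply vol_nonneg; auto|lra]. }
  pose proof (Hnonneg S). pose proof (Hnonneg (fun v => negb (S v))). lra.
Qed.

Lemma fnorm_nonneg r : unit_cube n r -> 0 <= fnorm n w r.
Proof.
  intros Hr. apply sumR_nonneg; intros u Hu.
  apply Rmult_le_pos; [apply Hr|apply vol_nonneg]; auto.
Qed.

Lemma fnorm_compl rho eta : (forall u, (u < n)%nat -> eta u = 1 - rho u) ->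
  fnorm n w eta = V - fnorm n w rho.
Proof.
  intros Heta. unfold fnorm.
  rewrite (sumR_ext n _ (fun u => vol n w u + -1 * (rho u * vol n w u)))
    by (intros u Hu; rewrite Heta by exact Hu; ring).
  rewrite sumR_plus, sumR_scal. ring.
Qed.

Lemma fcut_nonneg r : unit_cube n r -> 0 <= fcut n w r.
Proof.
  intros Hr. apply sumR_nonneg; intros u Hu; apply sumR_nonneg; intros v Hv.
  pose proof (Hr u Hu). pose proof (Hr v Hv). pose proof (proj1 (Hw u v Hu Hv)).
  apply Rmult_le_pos; [apply Rmult_le_pos|]; lra.
Qed.

Lemma fnorm_sq_le r : 0 < V -> fnorm n w r ^ 2 <= V * sumR n (fun u => r u ^ 2 * vol n w u).
Proof.
  intros HV. set (A := fnorm n w r). set (Q := sumR n (fun u => r u ^ 2 * vol n w u)).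
  assert (Hdev : 0 <= sumR n (fun u => vol n w u * (V * r u - A) ^ 2)).
  { apply sumR_nonneg; intros u Hu. apply Rmult_le_pos; [apply vol_nonneg; auto|apply pow2_ge_0]. }
  rewrite (sumR_ext n _ (fun u => V ^ 2 * (r u ^ 2 * vol n w u)
             + (-2 * V * A * (r u * vol n w u) + A ^ 2 * vol n w u))) in Hdev by (intros; ring).
  rewrite !sumR_plus, !sumR_scal in Hdev. fold Q A in Hdev.
  assert (0 <= V * (V * Q - A ^ 2)) by (replace (V * (V * Q - A ^ 2)) with
    (V ^ 2 * Q + (-2 * V * A * A + A ^ 2 * V)) by ring; exact Hdev).
  assert (0 <= V * Q - A ^ 2) by (apply (Rmult_le_reg_l V); lra).
  lra.
Qed.

Lemma varvol_le vmax r : 0 < V -> (forall u, (u < n)%nat -> vol n w u <= vmax) -> 0 <= vmax ->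
  unit_cube n r -> varvol n w r * V <= vmax * fnorm n w r * (V - fnorm n w r).
Proof.
  intros HV Hvmax Hvmax0 Hr.
  set (A := fnorm n w r). set (Q := sumR n (fun u => r u ^ 2 * vol n w u)).
  assert (HAQ : sumR n (fun u => r u * (1 - r u) * vol n w u) = A - Q).
  { rewrite (sumR_ext n _ (fun u => r u * vol n w u + -1 * (r u ^ 2 * vol n w u)))
      by (intros; ring).
    rewrite sumR_plus, sumR_scal. unfold A, fnorm, Q; ring. }
  assert (Hvar : varvol n w r <= vmax * (A - Q)).
  { rewrite <- HAQ, <- sumR_scal. apply sumR_le; intros u Hu.
    pose proof (Hr u Hu). pose proof (Hvmax u Hu). pose proof (vol_nonneg u Hu).
    assert (0 <= r u * (1 - r u) * vol n w u) by (apply Rmult_le_pos; [nra|lra]).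
    nra. }
  pose proof (fnorm_sq_le r HV) as HCS. fold A Q in HCS.
  assert (vmax * (A - Q) * V <= vmax * A * (V - A)) by nra.
  nra.
Qed.

Lemma cut_ge_cheeger_min h : 0 <= h ->
  (forall S, nonempty_proper n S ->
     h * Rmin (volS n w S) (volS n w (fun v => negb (S v))) <= cut n w S) ->
  forall S, h * Rmin (volS n w S) (volS n w (fun v => negb (S v))) <= cut n w S.
Proof.
  intros Hh Hproper S.
  destruct (classic (nonempty_proper n S)) as [HS|HS]; [auto|].
  assert (Hconst : (forall i, (i < n)%nat -> S i = false) \/ (forall i, (i < n)%nat -> S i = true)).
  { apply not_and_or in HS. destruct HS as [HS|HS]; [left|right]; intros i Hi;
      destruct (S i) eqn:E; auto; exfalso; apply HS; exists i; auto. }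
  assert (Hcut0 : cut n w S = 0).
  { apply sumR_eq0; intros u Hu; apply sumR_eq0; intros v Hv.
    destruct Hconst as [Hf|Ht]; [rewrite (Hf u Hu)|rewrite (Ht u Hu), (Ht v Hv)]; reflexivity. }
  assert (Hmin0 : Rmin (volS n w S) (volS n w (fun v => negb (S v))) <= 0).
  { destruct Hconst as [Hf|Ht].
    - replace (volS n w S) with 0; [apply Rmin_l|].
      symmetry; apply sumR_eq0; intros u Hu; rewrite (Hf u Hu); reflexivity.
    - replace (volS n w (fun v => negb (S v))) with 0; [apply Rmin_r|].
      symmetry; apply sumR_eq0; intros u Hu; rewrite (Ht u Hu); reflexivity. }
  rewrite Hcut0. nra.
Qed.

Lemma rounding_at_vertex r : (forall u, (u < n)%nat -> r u = 0 \/ r u = 1) ->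
  exists S, fcut n w r = cut n w S /\ fnorm n w r = volS n w S /\ varvol n w r = 0.
Proof.
  intros Hbin. exists (fun u => if Req_dec_T (r u) 1 then true else false).
  set (S := fun u => if Req_dec_T (r u) 1 then true else false).
  assert (HS : forall u, (u < n)%nat -> r u = if S u then 1 else 0).
  { intros u Hu; unfold S. destruct (Req_dec_T (r u) 1); auto.
    destruct (Hbin u Hu); [auto|congruence]. }
  repeat split.
  - apply sumR_ext; intros u Hu. apply sumR_ext; intros v Hv.
    rewrite (HS u Hu), (HS v Hv). destruct (S u), (S v); ring.
  - apply sumR_ext; intros u Hu. rewrite (HS u Hu). destruct (S u); ring.
  - apply sumR_eq0; intros u Hu. rewrite (HS u Hu). destruct (S u); ring.
Qed.

Lemma fcut_ge_expected_quadratic h al be ka a0 r : loopless n w -> 0 <= h ->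
  (forall S, h * Rmin (volS n w S) (volS n w (fun v => negb (S v))) <= cut n w S) ->
  (forall x, 0 <= x <= V -> al + be * (x - a0) - ka * (x - a0) ^ 2 <= Rmin x (V - x)) ->
  unit_cube n r ->
  h * (al + be * (fnorm n w r - a0) - ka * ((fnorm n w r - a0) ^ 2 + varvol n w r))
    <= fcut n w r.
Proof.
  intros Hl Hh Hcut Hq Hr.
  replace ((fnorm n w r - a0) ^ 2 + varvol n w r)
    with (evol2 n w r - 2 * a0 * fnorm n w r + a0 ^ 2) by (rewrite evol2_eq; ring).
  set (Phi := fun r => fcut n w r - h * (al + be * (fnorm n w r - a0)
                         - ka * (evol2 n w r - 2 * a0 * fnorm n w r + a0 ^ 2))).
  enough (0 <= Phi r) by (unfold Phi in *; lra).
  apply (multiaffine_nonneg_on_cube n); [| |exact Hr].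
  - intros k s Hk t. unfold Phi.
    rewrite (affine_fcut n w s k Hl Hk t), (affine_fnorm n w s k t), (affine_evol2 n w s k t).
    ring.
  - intros s Hbin. destruct (rounding_at_vertex s Hbin) as [S [Ecut [Evol Evar]]].
    unfold Phi. rewrite evol2_eq, Ecut, Evol, Evar.
    set (X := volS n w S). set (Y := volS n w (fun v => negb (S v))).
    assert (HQ : al + be * (X - a0) - ka * (X - a0) ^ 2 <= Rmin X Y).
    { replace Y with (V - X) by (pose proof (volS_compl S); unfold X, Y; lra).
      apply Hq, volS_bounds. }
    assert (h * (al + be * (X - a0) - ka * (X - a0) ^ 2) <= h * Rmin X Y)
      by (apply Rmult_le_compat_l; assumption).
    pose proof (Hcut S) as HcutS. fold X Y in HcutS.
    replace (X ^ 2 + 0 - 2 * a0 * X + a0 ^ 2) with ((X - a0) ^ 2) by ring.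
    lra.
Qed.

Lemma fcut_ge_centered_quadratic h al be ka r : loopless n w -> 0 <= h ->
  (forall S, h * Rmin (volS n w S) (volS n w (fun v => negb (S v))) <= cut n w S) ->
  unit_cube n r ->
  (forall x, 0 <= x <= V ->
     al + be * (x - fnorm n w r) - ka * (x - fnorm n w r) ^ 2 <= Rmin x (V - x)) ->
  h * (al - ka * varvol n w r) <= fcut n w r.
Proof.
  intros Hl Hh Hcut Hr Hq.
  pose proof (fcut_ge_expected_quadratic h al be ka (fnorm n w r) r Hl Hh Hcut Hq Hr) as Hround.
  replace (al - ka * varvol n w r) with (al + be * (fnorm n w r - fnorm n w r)
    - ka * ((fnorm n w r - fnorm n w r) ^ 2 + varvol n w r)) by ring.
  exact Hround.
Qed.

Hypothesis Hn : (2 <= n)%nat.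
Hypothesis Hc : connected n w.

Lemma cut_crossing_edge S : 0 < cut n w S ->
  exists u v, (u < n)%nat /\ (v < n)%nat /\ S u = true /\ S v = false /\
              0 < w u v /\ w u v <= cut n w S.
Proof.
  intros Hpos.
  set (term := fun u v => if S u then (if S v then 0 else w u v) else 0).
  assert (Hterm : forall u v, (u < n)%nat -> (v < n)%nat -> 0 <= term u v).
  { intros u v Hu Hv. unfold term. destruct (S u), (S v); try lra. apply (Hw u v Hu Hv). }
  destruct (sumR_pos_term _ _ Hpos) as [u [Hu Hpos_u]].
  destruct (sumR_pos_term _ _ Hpos_u) as [v [Hv Hpos_uv]].
  assert (Hle : term u v <= cut n w S).
  { apply Rle_trans with (sumR n (term u)).
    - apply sumR_ge_term; auto.
    - apply (sumR_ge_term n (fun u => sumR n (term u))); auto.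
      intros; apply sumR_nonneg; auto. }
  exists u, v. unfold term in *. destruct (S u), (S v); try lra. repeat split; auto.
Qed.

Lemma vol_pos u : (u < n)%nat -> 0 < vol n w u.
Proof.
  intros Hu. set (S := fun x => Nat.eqb x u).
  assert (HS : nonempty_proper n S).
  { split; [exists u; split; auto; apply Nat.eqb_refl|].
    destruct (Nat.eq_dec u 0); [exists 1%nat|exists 0%nat]; split; try lia; apply Nat.eqb_neq; lia. }
  destruct (cut_crossing_edge S (Hc S HS)) as [x [y [Hx [Hy [HSx [_ [Hxy _]]]]]]].
  apply Nat.eqb_eq in HSx; subst x.
  apply Rlt_le_trans with (w y u).
  - rewrite (proj2 (Hw u y Hu Hy)) in Hxy. exact Hxy.
  - apply (sumR_ge_term n (fun z => w z u)); auto. intros; apply (Hw i u); auto.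
Qed.

Lemma volS_pos S i : (i < n)%nat -> S i = true -> 0 < volS n w S.
Proof.
  intros Hi HS. apply Rlt_le_trans with (if S i then vol n w i else 0).
  - rewrite HS; apply vol_pos; auto.
  - apply (sumR_ge_term n (fun v => if S v then vol n w v else 0)); auto.
    intros j Hj; destruct (S j); [apply vol_nonneg; auto|lra].
Qed.

Lemma total_vol_pos : 0 < V.
Proof.
  apply Rlt_le_trans with (vol n w 0); [apply vol_pos; lia|].
  apply sumR_ge_term; [intros; apply vol_nonneg; auto|lia].
Qed.

Lemma cheeger_glb_bound hG : is_glb (cheeger_values n w) hG ->
  forall S, nonempty_proper n S ->
  hG * Rmin (volS n w S) (volS n w (fun v => negb (S v))) <= cut n w S.
Proof.
  intros HhG S HS.
  destruct HS as [[i [Hi HSi]] [j [Hj HSj]]].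
  assert (Hmin : 0 < Rmin (volS n w S) (volS n w (fun v => negb (S v)))).
  { apply Rmin_pos; [apply (volS_pos S i)|apply (volS_pos _ j)]; auto. rewrite HSj; reflexivity. }
  assert (Hratio : hG <= cut n w S / Rmin (volS n w S) (volS n w (fun v => negb (S v)))).
  { apply (proj1 HhG). exists S; split; [split; [exists i|exists j]; auto|reflexivity]. }
  replace (cut n w S) with (cut n w S / Rmin (volS n w S) (volS n w (fun v => negb (S v)))
                              * Rmin (volS n w S) (volS n w (fun v => negb (S v)))) by (field; lra).
  apply Rmult_le_compat_r; lra.
Qed.

Lemma cheeger_glb_pos hG : is_glb (cheeger_values n w) hG -> 0 < hG.
Proof.
  intros [_ Hgreatest].
  (* a nontrivial cut contains an edge, of weight at least the smallest positive weight d,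
     so every Cheeger ratio is at least d / V *)
  set (wpos := fun u v => if Rlt_dec 0 (w u v) then w u v else 1).
  set (d := minR (n - 1) (fun u => minR (n - 1) (wpos u))).
  assert (Hd : 0 < d).
  { apply minR_pos; intros; apply minR_pos; intros. unfold wpos.
    destruct (Rlt_dec 0 (w i i0)); lra. }
  pose proof total_vol_pos as HV.
  enough (d / V <= hG) by (pose proof (Rdiv_lt_0_compat d V Hd HV); lra).
  apply Hgreatest. intros x [S [HS ->]].
  destruct (cut_crossing_edge S (Hc S HS)) as [u [v [Hu [Hv [HSu [HSv [Huv Hcut]]]]]]].
  assert (Hdw : d <= w u v).
  { apply Rle_trans with (minR (n - 1) (wpos u)); 
      [apply (minR_le (n - 1) (fun x => minR (n - 1) (wpos x)) u); lia|].
    apply Rle_trans with (wpos u v); [apply minR_le; lia|].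
    unfold wpos; destruct (Rlt_dec 0 (w u v)); lra. }
  set (m := Rmin (volS n w S) (volS n w (fun v => negb (S v)))).
  assert (Hm : 0 < m).
  { apply Rmin_pos; [apply (volS_pos S u)|apply (volS_pos _ v)]; auto. rewrite HSv; reflexivity. }
  assert (HmV : m <= V) by (apply Rle_trans with (volS n w S); [apply Rmin_l|apply volS_bounds]).
  unfold Rdiv. apply Rmult_le_compat; [lra|left; apply Rinv_0_lt_compat; exact HV|lra|].
  apply Rinv_le_contravar; assumption.
Qed.

Lemma gamma_nonneg_and_bound :
  0 <= gamma n w /\ maxR (n - 1) (vol n w) * INR n <= gamma n w * V.
Proof.
  set (vmax := maxR (n - 1) (vol n w)). set (vmin := minR (n - 1) (vol n w)).
  assert (Hvmin : 0 < vmin) by (apply minR_pos; intros; apply vol_pos; lia).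
  assert (Hvmax : 0 <= vmax)
    by (apply Rle_trans with (vol n w 0); [apply vol_nonneg; lia|apply maxR_ge; lia]).
  assert (HnV : INR n * vmin <= V)
    by (rewrite <- sumR_const; apply sumR_le; intros; apply minR_le; lia).
  assert (Hg : 0 <= gamma n w)
    by (apply Rmult_le_pos; [|left; apply Rinv_0_lt_compat]; assumption).
  split; [exact Hg|].
  assert (E : gamma n w * V - vmax * INR n = gamma n w * (V - INR n * vmin))
    by (unfold gamma; fold vmax vmin; field; lra).
  assert (0 <= gamma n w * (V - INR n * vmin)) by (apply Rmult_le_pos; lra).
  lra.
Qed.

Lemma varvol_gamma_bound r : unit_cube n r ->
  let m := Rmin (fnorm n w r) (V - fnorm n w r) in
  varvol n w r * INR n <= gamma n w * m * (V - m).
Proof.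
  intros Hr m.
  set (vmax := maxR (n - 1) (vol n w)).
  pose proof total_vol_pos as HV.
  destruct gamma_nonneg_and_bound as [Hg Hgamma]. fold vmax in Hgamma.
  assert (Hvmax0 : 0 <= vmax)
    by (apply Rle_trans with (vol n w 0); [apply vol_nonneg; lia|apply maxR_ge; lia]).
  pose proof (varvol_le vmax r HV ltac:(intros; apply maxR_ge; lia) Hvmax0 Hr) as Hvar.
  assert (HA : 0 <= fnorm n w r) by (apply fnorm_nonneg; exact Hr).
  assert (HB : 0 <= V - fnorm n w r).
  { rewrite <- (fnorm_compl r (fun u => 1 - r u)) by reflexivity.
    apply fnorm_nonneg. intros u Hu. pose proof (Hr u Hu). lra. }
  assert (Hprod : fnorm n w r * (V - fnorm n w r) = m * (V - m)).
  { unfold m. destruct (Rle_dec (fnorm n w r) (V - fnorm n w r)).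
    - rewrite Rmin_left by assumption. reflexivity.
    - rewrite Rmin_right by lra. ring. }
  assert (Hm : 0 <= m * (V - m)) by (rewrite <- Hprod; apply Rmult_le_pos; assumption).
  rewrite Rmult_assoc, Hprod in Hvar.
  pose proof (pos_INR n).
  apply (Rmult_le_reg_r V); [exact HV|].
  assert (vmax * (m * (V - m)) * INR n <= gamma n w * V * (m * (V - m)))
    by (replace (vmax * (m * (V - m)) * INR n) with (vmax * INR n * (m * (V - m))) by ring;
        apply Rmult_le_compat_r; assumption).
  nra.
Qed.

Lemma fcut_ge_cheeger_fraction h e r : loopless n w -> 0 <= h ->
  (forall S, h * Rmin (volS n w S) (volS n w (fun v => negb (S v))) <= cut n w S) ->
  0 < e < 1 -> unit_cube n r -> 0 < Rmin (fnorm n w r) (V - fnorm n w r) ->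
  h * ((1 - 2 * gamma n w / (e ^ 2 * INR n)) * (1 - e)) * Rmin (fnorm n w r) (V - fnorm n w r)
    <= fcut n w r.
Proof.
  intros Hl Hh Hcut He Hr Hm.
  pose proof (varvol_gamma_bound r Hr) as Hvar. cbv zeta in Hvar.
  set (A := fnorm n w r) in *. set (m := Rmin A (V - A)) in *.
  set (c := (1 - 2 * gamma n w / (e ^ 2 * INR n)) * (1 - e)).
  destruct gamma_nonneg_and_bound as [Hg _].
  assert (Hnn : 0 < INR n) by (apply lt_0_INR; lia).
  pose proof (fcut_nonneg r Hr) as HN.
  destruct (Rle_dec c 0) as [Hc0|Hc0].
  { assert (0 <= h * m) by (apply Rmult_le_pos; lra). nra. }
  destruct (Rle_dec V (3 * m)) as [Hwide|Hnarrow].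
  - assert (Hround : h * ((1 - e) * m - (1 - e) / (e ^ 2 * m) * varvol n w r) <= fcut n w r).
    { apply (fcut_ge_centered_quadratic _ _ 0); auto. intros x Hx.
      rewrite Rmult_0_l, Rplus_0_r. apply wide_parabola_le_min; auto. }
    pose proof (wide_case_bound e (gamma n w) (INR n) m V (varvol n w r) He Hm Hwide Hnn Hg Hvar).
    assert (h * (c * m) <= h * ((1 - e) * m - (1 - e) / (e ^ 2 * m) * varvol n w r))
      by (apply Rmult_le_compat_l; assumption).
    lra.
  - destruct (narrow_parabola_le_min V A ltac:(fold m; lra)) as [be Hq].
    assert (Hround : h * (m - 1 / (V - 2 * m) * varvol n w r) <= fcut n w r)
      by (apply (fcut_ge_centered_quadratic _ _ be); auto).
    pose proof (narrow_case_bound e (gamma n w) (INR n) m V (varvol n w r)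
                  He Hm ltac:(lra) Hnn Hg Hvar ltac:(fold c; lra)).
    assert (h * (c * m) <= h * (m - 1 / (V - 2 * m) * varvol n w r))
      by (apply Rmult_le_compat_l; assumption).
    lra.
Qed.

Lemma frac_cheeger_value_ge hG e x : loopless n w -> is_glb (cheeger_values n w) hG ->
  0 < e < 1 -> frac_cheeger_values n w x ->
  hG * ((1 - 2 * gamma n w / (e ^ 2 * INR n)) * (1 - e)) <= x.
Proof.
  intros Hl HhG He [rho [eta [Hpart [Hrho0 [Heta0 ->]]]]].
  assert (Hr : unit_cube n rho) by (intros u Hu; apply Hpart, Hu).
  assert (Heta : forall u, (u < n)%nat -> eta u = 1 - rho u)
    by (intros u Hu; destruct (Hpart u Hu) as [_ [_ Hsum]]; lra).
  assert (Hnum : sumR n (fun u => sumR n (fun v => rho u * eta v * w u v)) = fcut n w rho).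
  { apply sumR_ext; intros u Hu. apply sumR_ext; intros v Hv. rewrite Heta; auto. }
  pose proof (fnorm_compl rho eta Heta) as Heta_norm.
  assert (Hm : 0 < Rmin (fnorm n w rho) (V - fnorm n w rho)).
  { assert (0 <= fnorm n w eta) by (apply fnorm_nonneg; intros u Hu; apply Hpart, Hu).
    pose proof (fnorm_nonneg rho Hr). apply Rmin_pos; lra. }
  pose proof (cheeger_glb_pos hG HhG) as HhG0.
  pose proof (fcut_ge_cheeger_fraction hG e rho Hl ltac:(lra)
                (cut_ge_cheeger_min hG ltac:(lra) (cheeger_glb_bound hG HhG)) He Hr Hm) as Hfrac.
  unfold frac_ratio. rewrite Hnum, Heta_norm.
  apply (Rmult_le_reg_r (Rmin (fnorm n w rho) (V - fnorm n w rho))); [exact Hm|].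
  replace (fcut n w rho / Rmin (fnorm n w rho) (V - fnorm n w rho)
           * Rmin (fnorm n w rho) (V - fnorm n w rho)) with (fcut n w rho) by (field; lra).
  exact Hfrac.
Qed.

End WeightedGraph.

Theorem mainTheorem12 (n : nat) (w : nat -> nat -> R)
  (Hn : (2 <= n)%nat) (Hw : weighted_graph n w) (Hl : loopless n w)
  (Hc : connected n w)
  (hG : R) (HhG : is_glb (cheeger_values n w) hG)
  (th : R) (Hth : is_glb (frac_cheeger_values n w) th)
  (eps : R) (Heps : 0 < eps < 1) :
  th / hG >= (1 - 2 * gamma n w / (eps ^ 2 * INR n)) * (1 - eps).
Proof.
  pose proof (cheeger_glb_pos n w Hw Hn Hc hG HhG) as HhG0.
  assert (Hlower : hG * ((1 - 2 * gamma n w / (eps ^ 2 * INR n)) * (1 - eps)) <= th).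
  { apply (proj2 Hth). intros x Hx. apply (frac_cheeger_value_ge n w Hw Hn Hc); assumption. }
  apply Rle_ge, (Rmult_le_reg_l hG); [exact HhG0|].
  replace (hG * (th / hG)) with th by (field; lra).
  exact Hlower.
Qed.
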